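(* Let $n\ge3$, $B$ the closed unit disc, and let $X\in C^3(B,\mathbb R^n)$ be a conformally parametrized ($X_u\cdot X_u=W=X_v\cdot X_v$, $X_u\cdot X_v=0$) minimal immersion with flat normal bundle, i.e. there is a $C^2$ orthonormal normal section $\{N_1,\dots,N_{n-2}\}$ whose torsion coefficients all vanish. Assume $X$ is stable: for every $C^2$ unit normal field $N$ along $X$ and every $\varphi\in C_0^\infty(B,\mathbb R)$, $\frac{d^2}{d\varepsilon^2}\mathcal A[X+\varepsilon\varphi N]\big|_{\varepsilon=0}\ge0$, where $\mathcal A[Y]=\iint_B\sqrt{\det(Y_{u^i}\cdot Y_{u^j})}\,dudv$. Let $K$ be the Gaussian curvature of $X$. Then for every $\mu$ with $0<\mu\le\frac{2}{n-2}$, $$\iint_B|\nabla\varphi|^2\,dudv\ge\mu\iint_B(-K)W\varphi^2\,dudv\quad\text{for all }\varphi\in C_0^\infty(B,\mathbb R).$$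
   Context: Orthonormal normal section: $N_\sigma\in C^2(B,\mathbb R^n)$ with $X_{u^i}\cdot N_\sigma=0$, $N_\sigma\cdot N_\omega=\delta_{\sigma\omega}$; torsion coefficients $T^\omega_{\sigma,i}=N_{\sigma,u^i}\cdot N_\omega$ ($\sigma\ne\omega$). With $L_{\sigma,ij}=X_{u^iu^j}\cdot N_\sigma$: minimal means $L_{\sigma,11}+L_{\sigma,22}=0$ for all $\sigma$; $K:=\sum_\sigma(L_{\sigma,11}L_{\sigma,22}-L_{\sigma,12}^2)/W^2$ (independent of the section), and $K\le0$ for minimal $X$. *)

From Stdlib Require Import Reals List.
From Coquelicot Require Import Coquelicot.
Open Scope R_scope.

(** Vectors of R^n are represented as maps [nat -> R]; only components
    [0 .. n-1] are ever used. *)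
Definition dotn (n : nat) (a b : nat -> R) : R :=
  fold_right Rplus 0 (map (fun k => a k * b k) (seq 0 n)).

Definition pu (f : R -> R -> R) : R -> R -> R :=
  fun u v => Derive (fun t => f t v) u.
Definition pv (f : R -> R -> R) : R -> R -> R :=
  fun u v => Derive (fun t => f u t) v.
Definition pd (d : bool) (f : R -> R -> R) := if d then pv f else pu f.
Definition pds (l : list bool) (f : R -> R -> R) : R -> R -> R :=
  fold_right pd f l.

Definition uncurry2 (f : R -> R -> R) : R * R -> R := fun p => f (fst p) (snd p).

Definition Ck_on (k : nat) (U : R -> R -> Prop) (f : R -> R -> R) : Prop :=
  forall l : list bool, (length l <= k)%nat -> forall u v, U u v ->
    continuous (uncurry2 (pds l f)) (u, v) /\
    ((length l < k)%nat ->
       ex_derive (fun t => pds l f t v) u /\ ex_derive (fun t => pds l f u t) v).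

Definition inB (u v : R) : Prop := u ^ 2 + v ^ 2 <= 1.

(** C^k(B): C^k on an open disc containing the closed unit disc B
    (equivalent, by the Whitney/Stein extension theorem, to the usual
    "derivatives up to order k extend continuously to B"). *)
Definition CkB (k : nat) (f : R -> R -> R) : Prop :=
  exists rho, 1 < rho /\ Ck_on k (fun u v => u ^ 2 + v ^ 2 < rho ^ 2) f.

Definition CkBvec (k n : nat) (X : R -> R -> nat -> R) : Prop :=
  forall j, (j < n)%nat -> CkB k (fun u v => X u v j).

Definition C0inf (phi : R -> R -> R) : Prop :=
  (forall (l : list bool) u v,
      continuous (uncurry2 (pds l phi)) (u, v) /\
      ex_derive (fun t => pds l phi t v) u /\ ex_derive (fun t => pds l phi u t) v) /\
  (exists r, 0 <= r < 1 /\ forall u v, r ^ 2 <= u ^ 2 + v ^ 2 -> phi u v = 0).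

Definition Vu (X : R -> R -> nat -> R) (u v : R) : nat -> R :=
  fun j => pu (fun a b => X a b j) u v.
Definition Vv (X : R -> R -> nat -> R) (u v : R) : nat -> R :=
  fun j => pv (fun a b => X a b j) u v.
Definition Vuu X u v : nat -> R := fun j => pu (pu (fun a b => X a b j)) u v.
Definition Vuv X u v : nat -> R := fun j => pv (pu (fun a b => X a b j)) u v.
Definition Vvv X u v : nat -> R := fun j => pv (pv (fun a b => X a b j)) u v.

Definition IntB (f : R -> R -> R) : R :=
  RInt (fun u => RInt (fun v => f u v) (- sqrt (1 - u ^ 2)) (sqrt (1 - u ^ 2))) (-1) 1.

Definition Wf (n : nat) X u v : R := dotn n (Vu X u v) (Vu X u v).

Definition Area (n : nat) (Y : R -> R -> nat -> R) : R :=
  IntB (fun u v =>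
    sqrt (dotn n (Vu Y u v) (Vu Y u v) * dotn n (Vv Y u v) (Vv Y u v)
          - (dotn n (Vu Y u v) (Vv Y u v)) ^ 2)).

Definition L11 n X (Nf : nat -> R -> R -> nat -> R) s u v := dotn n (Vuu X u v) (Nf s u v).
Definition L12 n X (Nf : nat -> R -> R -> nat -> R) s u v := dotn n (Vuv X u v) (Nf s u v).
Definition L22 n X (Nf : nat -> R -> R -> nat -> R) s u v := dotn n (Vvv X u v) (Nf s u v).

Definition GaussK (n : nat) X Nf u v : R :=
  fold_right Rplus 0
    (map (fun s => (L11 n X Nf s u v * L22 n X Nf s u v - (L12 n X Nf s u v) ^ 2)
                   / (Wf n X u v) ^ 2)
         (seq 0 (n - 2))).

Definition vary (X : R -> R -> nat -> R) (eps : R) (phi : R -> R -> R)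
  (N : R -> R -> nat -> R) : R -> R -> nat -> R :=
  fun u v j => X u v j + eps * phi u v * N u v j.

From Stdlib Require Import Reals List Lra Lia Classical ClassicalEpsilon.
From Coquelicot Require Import Coquelicot.
Open Scope R_scope.

(* Fix a member N_s of the flat normal frame. Expanding the area element
   sqrt (E G - F^2) of X + eps phi N_s to second order in eps, conformality
   reduces the second variation to the integral of
   |grad phi|^2 + phi^2 (|N_s,u|^2 + |N_s,v|^2) + 4 phi^2 (X_u.N_s,u)(X_v.N_s,v)/W
   - phi^2 (X_u.N_s,v + X_v.N_s,u)^2 / W.
   Since the torsion vanishes, N_s,u and N_s,v are tangential, so by Parseval in
   the orthonormal frame (X_u/sqrt W, X_v/sqrt W, N_1, ..., N_(n-2)) and the
   Weingarten relations X_u.N_s,u = -L_s,11 etc. (with L_s,22 = -L_s,11) the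
   integrand becomes |grad phi|^2 - 2 phi^2 (L_s,11^2 + L_s,12^2) / W.
   Stability makes each of these n - 2 integrals nonnegative; their sum is
   (n-2) \iint |grad phi|^2 - 2 \iint (-K) W phi^2, and -K >= 0 gives the
   claim for every mu <= 2/(n-2). *)

(** * Continuity and parametric integrals *)

Lemma continuous_pair {T U V : UniformSpace} (f : T -> U) (g : T -> V) (x : T) :
  continuous f x -> continuous g x -> continuous (fun y => (f y, g y)) x.
Proof.
intros Hf Hg.
apply (continuous_comp_2 f g (fun a b => (a, b))); auto.
apply (continuous_ext (fun z => z)); [intros [a b]; reflexivity | apply continuous_id].
Qed.

Section RealContinuity.
Context {T : UniformSpace}.

Lemma continuous_Rplus (f g : T -> R) x :
  continuous f x -> continuous g x -> continuous (fun y => f y + g y) x.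
Proof. intros; apply (continuous_plus f g); auto. Qed.

Lemma continuous_Rminus (f g : T -> R) x :
  continuous f x -> continuous g x -> continuous (fun y => f y - g y) x.
Proof. intros; apply (continuous_minus f g); auto. Qed.

Lemma continuous_Rmult (f g : T -> R) x :
  continuous f x -> continuous g x -> continuous (fun y => f y * g y) x.
Proof. intros; apply (continuous_mult f g); auto. Qed.

Lemma continuous_Rconst (k : R) (x : T) : continuous (fun _ => k) x.
Proof. apply continuous_const. Qed.

Lemma continuous_Rsqr (f : T -> R) x : continuous f x -> continuous (fun y => f y ^ 2) x.
Proof.
intros H. apply (continuous_ext (fun y => f y * (f y * 1))); [intros; simpl; ring|].
repeat apply continuous_Rmult; auto using continuous_Rconst.
Qed.

Lemma continuous_Rsqrt (f : T -> R) x : continuous f x -> continuous (fun y => sqrt (f y)) x.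
Proof. intros H. apply (continuous_comp f sqrt); auto using continuous_sqrt. Qed.

Lemma continuous_Rdiv (f g : T -> R) x :
  continuous f x -> continuous g x -> g x <> 0 -> continuous (fun y => f y / g y) x.
Proof.
intros Hf Hg H. apply continuous_Rmult; auto.
apply (continuous_comp g Rinv); auto using continuous_Rinv.
Qed.

End RealContinuity.

Ltac continuity_R := repeat match goal with
  | |- continuous (fun _ => ?k) _ => apply continuous_Rconst
  | |- continuous (fun y => _ ^ 2) _ => apply continuous_Rsqr
  | |- continuous (fun y => _ + _) _ => apply continuous_Rplus
  | |- continuous (fun y => _ - _) _ => apply continuous_Rminus
  | |- continuous (fun y => _ * _) _ => apply continuous_Rmult
  end.

Lemma Rabs_lt_of_near (d e x : R) : Rabs (x - e) < d - Rabs e -> Rabs x < d.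
Proof.
intros H. assert (Rabs x <= Rabs e + Rabs (x - e)).
{ replace x with (e + (x - e)) at 1 by ring. apply Rabs_triang. }
lra.
Qed.

Lemma locally_Rabs_lt (d : posreal) (e : R) : Rabs e < d -> locally e (fun x => Rabs x < d).
Proof.
intros H. assert (Hp : 0 < d - Rabs e) by lra.
exists (mkposreal _ Hp). intros y Hy. apply (Rabs_lt_of_near d e), Hy.
Qed.

Lemma uniformly_near_on_segment {U : UniformSpace} (h : U -> R -> R) (p0 : U) (a b : R)
  (eps : posreal) :
  (forall t, a <= t <= b -> continuous (fun z : U * R => h (fst z) (snd z)) (p0, t)) ->
  exists d : posreal, forall p, ball p0 d p -> forall t, a <= t <= b ->
    Rabs (h p t - h p0 t) <= 2 * eps.
Proof.
intros Hc.
assert (Hd : forall t, exists d : posreal, a <= t <= b ->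
   forall p t', ball p0 d p -> ball t d t' -> Rabs (h p t' - h p0 t) < eps).
{ intros t. destruct (classic (a <= t <= b)) as [Ht|Ht].
  - specialize (Hc t Ht). unfold continuous in Hc. rewrite filterlim_locally in Hc.
    destruct (Hc eps) as [d Hd].
    exists d. intros _ p t' H1 H2. apply (Hd (p, t')). split; assumption.
  - exists (mkposreal 1 Rlt_0_1). intros H; contradiction. }
apply choice in Hd as [df Hdf].
destruct (compactness_value_1d a b df) as [d Hcomp].
exists d. intros p Hp t' Ht'. specialize (Hcomp t' Ht').
destruct (classic (Rabs (h p t' - h p0 t') <= 2 * eps)) as [G|G]; [exact G|].
exfalso. apply Hcomp. intros [t [Ht [Hdt Hle]]].
apply G.
assert (A1 := Hdf t Ht p t' (ball_le _ _ _ Hle _ Hp) Hdt).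
assert (A2 := Hdf t Ht p0 t' (ball_center _ _) Hdt).
replace (h p t' - h p0 t') with ((h p t' - h p0 t) - (h p0 t' - h p0 t)) by ring.
eapply Rle_trans; [apply Rabs_triang|]. rewrite Rabs_Ropp. lra.
Qed.

Lemma continuous_RInt_param {U : UniformSpace} (h : U -> R -> R) (p0 : U) (a b : R) :
  a <= b ->
  (forall t, a <= t <= b -> continuous (fun z : U * R => h (fst z) (snd z)) (p0, t)) ->
  locally p0 (fun p => ex_RInt (h p) a b) ->
  continuous (fun p => RInt (h p) a b) p0.
Proof.
intros Hab Hc Hex.
apply filterlim_locally. intros eps.
assert (He' : 0 < eps / (2 * (b - a + 1))).
{ apply Rdiv_lt_0_compat; [apply eps | lra]. }
destruct (uniformly_near_on_segment h p0 a b (mkposreal _ He') Hc) as [d Hunif].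
simpl in Hunif.
assert (Hl : locally p0 (fun p => ball p0 d p)) by (exists d; auto).
generalize (filter_and _ _ Hl Hex). apply filter_imp. intros p [Hp Hexp].
change (Rabs (RInt (h p) a b - RInt (h p0) a b) < eps).
assert (Hex0 : ex_RInt (h p0) a b) by (apply locally_singleton in Hex; exact Hex).
assert (E : RInt (h p) a b - RInt (h p0) a b = RInt (fun t => h p t - h p0 t) a b).
{ symmetry. apply (RInt_minus (h p) (h p0) a b Hexp Hex0). }
rewrite E. eapply Rle_lt_trans.
- apply abs_RInt_le_const with (M := 2 * (eps / (2 * (b - a + 1)))); auto.
  apply (ex_RInt_minus (h p) (h p0) a b Hexp Hex0).
- apply Rmult_lt_reg_r with (2 * (b - a + 1)); [lra|].
  field_simplify; try lra. destruct eps as [eps Heps]; simpl. nra.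
Qed.

Definition continuous3 (h : R -> R -> R -> R) (e u w : R) : Prop :=
  continuous (fun z : (R * R) * R => h (fst (fst z)) (snd (fst z)) (snd z)) ((e, u), w).

Lemma continuous3_2d_ew h e u w : continuous3 h e u w ->
  continuity_2d_pt (fun x v => h x u v) e w.
Proof.
intros H. apply continuity_2d_pt_filterlim.
apply (continuous_comp (fun z : R * R => ((fst z, u), snd z))
   (fun z : (R * R) * R => h (fst (fst z)) (snd (fst z)) (snd z)) (e, w)); [|exact H].
apply continuous_pair; [apply continuous_pair|];
  auto using continuous_fst, continuous_snd, continuous_const.
Qed.

Lemma continuous3_uw h e u w : continuous3 h e u w ->
  continuous (fun z : R * R => h e (fst z) (snd z)) (u, w).
Proof.
intros H.
apply (continuous_comp (fun z : R * R => ((e, fst z), snd z))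
   (fun z : (R * R) * R => h (fst (fst z)) (snd (fst z)) (snd z)) (u, w)); [|exact H].
apply continuous_pair; [apply continuous_pair|];
  auto using continuous_fst, continuous_snd, continuous_const.
Qed.

Lemma continuous3_w h e u w : continuous3 h e u w -> continuous (fun v => h e u v) w.
Proof.
intros H.
apply (continuous_comp (fun v : R => ((e, u), v))
   (fun z : (R * R) * R => h (fst (fst z)) (snd (fst z)) (snd z)) w); [|exact H].
apply continuous_pair; auto using continuous_const, continuous_id.
Qed.

Lemma continuous_2d_slice (h : R -> R -> R) u w :
  continuous (fun z : R * R => h (fst z) (snd z)) (u, w) -> continuous (h u) w.
Proof.
intros H. apply (continuous_comp (fun v : R => (u, v)) (fun z : R * R => h (fst z) (snd z)) w);
  [|exact H].
apply continuous_pair; auto using continuous_const, continuous_id.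
Qed.

Lemma is_derive_RInt_param_ball (G G1 : R -> R -> R) (d : posreal) (a b e0 : R) :
  Rabs e0 < d ->
  (forall e t, Rabs e < d -> is_derive (fun x => G x t) e (G1 e t)) ->
  (forall t, continuity_2d_pt G1 e0 t) ->
  (forall e, Rabs e < d -> ex_RInt (G e) a b) ->
  is_derive (fun e => RInt (G e) a b) e0 (RInt (G1 e0) a b).
Proof.
intros He0 HD HG1 Hex.
assert (HDer : forall x t, Rabs x < d -> Derive (fun z => G z t) x = G1 x t).
{ intros x t Hx. apply is_derive_unique, HD; auto. }
replace (RInt (G1 e0) a b) with (RInt (fun t => Derive (fun z => G z t) e0) a b)
  by (apply RInt_ext; intros t _; apply HDer; auto).
apply (is_derive_RInt_param G).
- generalize (locally_Rabs_lt d e0 He0). apply filter_imp. intros x Hx t _.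
  eexists. apply HD; auto.
- intros t _. apply continuity_2d_pt_ext_loc with G1; [|apply HG1].
  assert (Hp : 0 < d - Rabs e0) by lra.
  exists (mkposreal _ Hp). intros x v Hx _. symmetry. apply HDer, (Rabs_lt_of_near d e0), Hx.
- generalize (locally_Rabs_lt d e0 He0). apply filter_imp. intros x Hx. apply Hex; auto.
Qed.

(** * Integrals over the square and over the disc *)

Definition IntSq (h : R -> R -> R) : R := RInt (fun u => RInt (h u) (-1) 1) (-1) 1.

Lemma ex_RInt_slice (G : R -> R -> R -> R) e u :
  (forall w, continuous3 G e u w) -> ex_RInt (G e u) (-1) 1.
Proof.
intros HG. apply (ex_RInt_continuous (V := R_CompleteNormedModule)). intros w _.
apply continuous3_w, HG.
Qed.

Lemma is_derive_IntSq (G G1 : R -> R -> R -> R) (d : posreal) (e0 : R) :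
  Rabs e0 < d ->
  (forall e u w, Rabs e < d -> is_derive (fun x => G x u w) e (G1 e u w)) ->
  (forall e u w, Rabs e < d -> continuous3 G e u w) ->
  (forall e u w, Rabs e < d -> continuous3 G1 e u w) ->
  is_derive (fun e => IntSq (G e)) e0 (IntSq (G1 e0)).
Proof.
intros He0 HD HG HG1.
assert (Hinner : forall e u, Rabs e < d ->
  is_derive (fun x => RInt (G x u) (-1) 1) e (RInt (G1 e u) (-1) 1)).
{ intros e u He. apply (is_derive_RInt_param_ball (fun x => G x u) (fun x => G1 x u) d); auto.
  - intros t. apply continuous3_2d_ew, HG1; auto.
  - intros x Hx. apply ex_RInt_slice. intros; apply HG; auto. }
apply (is_derive_RInt_param_ball (fun x u => RInt (G x u) (-1) 1)
         (fun x u => RInt (G1 x u) (-1) 1) d); auto.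
- intros u. apply continuity_2d_pt_filterlim.
  apply (continuous_RInt_param (U := prod_UniformSpace R_UniformSpace R_UniformSpace)
           (fun p t => G1 (fst p) (snd p) t) (e0, u) (-1) 1); [lra| intros; apply HG1; auto|].
  assert (Hp : 0 < d - Rabs e0) by lra.
  exists (mkposreal _ Hp). intros [x v] [Hx _]. apply ex_RInt_slice.
  intros; apply HG1, (Rabs_lt_of_near d e0), Hx.
- intros x Hx. apply (ex_RInt_continuous (V := R_CompleteNormedModule)). intros u _.
  apply (continuous_RInt_param (U := R_UniformSpace) (G x) u (-1) 1); [lra| |].
  + intros t _. apply continuous3_uw, HG; auto.
  + apply filter_forall. intros v. apply ex_RInt_slice. intros; apply HG; auto.
Qed.

Definition continuous2 (h : R -> R -> R) : Prop :=
  forall u w, continuous (fun z : R * R => h (fst z) (snd z)) (u, w).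

Lemma ex_RInt_IntSq_inner h : continuous2 h -> forall u, ex_RInt (h u) (-1) 1.
Proof.
intros H u. apply (ex_RInt_continuous (V := R_CompleteNormedModule)). intros z _.
apply continuous_2d_slice, H.
Qed.

Lemma ex_RInt_IntSq_outer h : continuous2 h -> ex_RInt (fun u => RInt (h u) (-1) 1) (-1) 1.
Proof.
intros H. apply (ex_RInt_continuous (V := R_CompleteNormedModule)). intros u _.
apply (continuous_RInt_param (U := R_UniformSpace) h u (-1) 1); [lra | intros; apply H |].
apply filter_forall. apply ex_RInt_IntSq_inner, H.
Qed.

Lemma IntSq_plus h1 h2 : continuous2 h1 -> continuous2 h2 ->
  IntSq (fun u w => h1 u w + h2 u w) = IntSq h1 + IntSq h2.
Proof.
intros H1 H2. unfold IntSq.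
transitivity (RInt (fun u => RInt (h1 u) (-1) 1 + RInt (h2 u) (-1) 1) (-1) 1).
{ apply RInt_ext. intros u _.
  apply (RInt_plus (V := R_CompleteNormedModule)); apply ex_RInt_IntSq_inner; auto. }
apply (RInt_plus (V := R_CompleteNormedModule)
  (fun u => RInt (h1 u) (-1) 1) (fun u => RInt (h2 u) (-1) 1));
  apply ex_RInt_IntSq_outer; auto.
Qed.

Lemma IntSq_scal k h : continuous2 h -> IntSq (fun u w => k * h u w) = k * IntSq h.
Proof.
intros H. unfold IntSq.
transitivity (RInt (fun u => k * RInt (h u) (-1) 1) (-1) 1).
{ apply RInt_ext. intros u _.
  apply (RInt_scal (V := R_CompleteNormedModule)); apply ex_RInt_IntSq_inner; auto. }
apply (RInt_scal (V := R_CompleteNormedModule) (fun u => RInt (h u) (-1) 1)).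
apply ex_RInt_IntSq_outer; auto.
Qed.

Lemma IntSq_ge0 h : continuous2 h ->
  (forall u w, -1 < u < 1 -> -1 < w < 1 -> 0 <= h u w) -> 0 <= IntSq h.
Proof.
intros H Hp. unfold IntSq. apply RInt_ge_0; [lra | apply ex_RInt_IntSq_outer; auto |].
intros u Hu. apply RInt_ge_0; [lra | apply ex_RInt_IntSq_inner; auto |].
intros w Hw. apply Hp; auto.
Qed.

Definition half_chord (u : R) : R := sqrt (1 - u ^ 2).
Definition clamp (w : R) : R := Rmax (-1) (Rmin 1 w).

(* Substituting v = half_chord u * w maps [-1,1]^2 onto B; clamping the
   arguments makes the pulled-back integrand continuous on all of R^2. *)
Definition disc_to_square (g : R -> R -> R) (u w : R) : R :=
  half_chord u * g (clamp u) (half_chord u * clamp w).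

Lemma clamp_id w : -1 <= w <= 1 -> clamp w = w.
Proof. intros H. unfold clamp, Rmax, Rmin. repeat destruct Rle_dec; lra. Qed.

Lemma clamp_bound w : -1 <= clamp w <= 1.
Proof. unfold clamp, Rmax, Rmin. repeat destruct Rle_dec; lra. Qed.

Lemma clamp_idem w : clamp (clamp w) = clamp w.
Proof. apply clamp_id, clamp_bound. Qed.

Lemma clamp_lipschitz a b : Rabs (clamp a - clamp b) <= Rabs (a - b).
Proof.
unfold clamp, Rmax, Rmin. repeat destruct Rle_dec;
  repeat (rewrite Rabs_left1 by lra || rewrite Rabs_pos_eq by lra); try lra;
  unfold Rabs; repeat destruct Rcase_abs; lra.
Qed.

Lemma continuous_clamp w : continuous clamp w.
Proof.
apply filterlim_locally. intros eps. exists eps. intros y Hy.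
change (Rabs (clamp y - clamp w) < eps). change (Rabs (y - w) < eps) in Hy.
eapply Rle_lt_trans; [apply clamp_lipschitz | exact Hy].
Qed.

Lemma continuous_half_chord u : continuous half_chord u.
Proof.
apply (continuous_Rsqrt (fun x => 1 - x ^ 2)). continuity_R. apply continuous_id.
Qed.

Lemma half_chord_ge0 u : 0 <= half_chord u.
Proof. apply sqrt_pos. Qed.

Lemma half_chord_sqr u : -1 <= u <= 1 -> half_chord u * half_chord u = 1 - u ^ 2.
Proof. intros H. apply sqrt_sqrt. nra. Qed.

Lemma half_chord_out u : 1 <= Rabs u -> half_chord u = 0.
Proof.
intros H. apply sqrt_neg_0.
destruct (Rle_dec 0 u); [rewrite Rabs_pos_eq in H | rewrite Rabs_left in H]; nra.
Qed.

Lemma half_chord_clamp u : half_chord (clamp u) = half_chord u.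
Proof.
destruct (Rle_dec (Rabs u) 1) as [H|H].
- rewrite clamp_id; auto. apply Rabs_le_between; auto.
- rewrite (half_chord_out u) by lra. apply half_chord_out.
  unfold clamp, Rmax, Rmin.
  destruct (Rle_dec 0 u); [rewrite Rabs_pos_eq in H | rewrite Rabs_left in H]; try lra;
    repeat destruct Rle_dec; try lra; unfold Rabs; destruct Rcase_abs; lra.
Qed.

Lemma inB_disc_to_square u w : inB (clamp u) (half_chord u * clamp w).
Proof.
unfold inB. destruct (Rle_dec (Rabs u) 1) as [H|H].
- assert (Hu : -1 <= u <= 1) by (apply Rabs_le_between; exact H).
  rewrite (clamp_id u Hu).
  assert (Hw := clamp_bound w).
  replace ((half_chord u * clamp w) ^ 2) with
    ((half_chord u * half_chord u) * (clamp w * clamp w)) by ring.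
  rewrite half_chord_sqr by exact Hu.
  assert (0 <= 1 - u ^ 2) by nra.
  assert (clamp w * clamp w <= 1) by nra. nra.
- rewrite half_chord_out by lra. assert (Hc := clamp_bound u). nra.
Qed.

Definition continuous_B (g : R -> R -> R) : Prop :=
  forall u v, inB u v -> continuous (uncurry2 g) (u, v).

Lemma continuous_B_plus g1 g2 :
  continuous_B g1 -> continuous_B g2 -> continuous_B (fun u v => g1 u v + g2 u v).
Proof. intros H1 H2 u v Huv. apply (continuous_Rplus (uncurry2 g1) (uncurry2 g2)); auto. Qed.

Lemma continuous_B_scal k g : continuous_B g -> continuous_B (fun u v => k * g u v).
Proof.
intros H u v Huv. apply (continuous_Rmult (fun _ => k) (uncurry2 g)); auto.
apply continuous_Rconst.
Qed.

Lemma continuous_B_comp_square (g : R -> R -> R) {T : UniformSpace} (pu pw : T -> R) x :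
  continuous_B g -> continuous pu x -> continuous pw x ->
  continuous (fun z => g (clamp (pu z)) (half_chord (pu z) * clamp (pw z))) x.
Proof.
intros Hg Hu Hw.
apply (continuous_comp (fun z => (clamp (pu z), half_chord (pu z) * clamp (pw z))) (uncurry2 g)).
- apply continuous_pair.
  + apply (continuous_comp pu clamp); auto using continuous_clamp.
  + apply continuous_Rmult.
    * apply (continuous_comp pu half_chord); auto using continuous_half_chord.
    * apply (continuous_comp pw clamp); auto using continuous_clamp.
- apply Hg, inB_disc_to_square.
Qed.

Lemma continuous2_disc_to_square g : continuous_B g -> continuous2 (disc_to_square g).
Proof.
intros Hg u w. unfold disc_to_square.
apply (continuous_Rmult (fun z : R * R => half_chord (fst z))).
- apply (continuous_comp fst half_chord); auto using continuous_fst, continuous_half_chord.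
- apply (continuous_B_comp_square g fst snd); auto using continuous_fst, continuous_snd.
Qed.

Lemma IntB_IntSq g : continuous_B g -> IntB g = IntSq (disc_to_square g).
Proof.
intros Hg. unfold IntB, IntSq. apply RInt_ext. intros u Hu.
rewrite Rmin_left in Hu by lra. rewrite Rmax_right in Hu by lra.
assert (Hu' : -1 <= u <= 1) by lra.
transitivity (RInt (fun w => scal (half_chord u) (g u (half_chord u * w + 0))) (-1) 1).
2: { apply RInt_ext. intros w Hw. rewrite Rmin_left in Hw by lra.
     rewrite Rmax_right in Hw by lra.
     unfold disc_to_square. rewrite !clamp_id by lra. rewrite Rplus_0_r. reflexivity. }
transitivity (RInt (g u) (half_chord u * -1 + 0) (half_chord u * 1 + 0)).
{ unfold half_chord. f_equal; ring. }
symmetry. apply (RInt_comp_lin (V := R_CompleteNormedModule) (g u) (half_chord u) 0 (-1) 1).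
apply (ex_RInt_continuous (V := R_CompleteNormedModule)). intros z Hz.
apply (continuous_2d_slice g u z). apply Hg.
assert (Hs := half_chord_ge0 u). assert (Hs2 := half_chord_sqr u Hu').
replace (half_chord u * -1 + 0) with (- half_chord u) in Hz by ring.
replace (half_chord u * 1 + 0) with (half_chord u) in Hz by ring.
rewrite Rmin_left in Hz by lra. rewrite Rmax_right in Hz by lra.
unfold inB. assert (z * z <= half_chord u * half_chord u) by nra. nra.
Qed.

Lemma IntB_plus g1 g2 : continuous_B g1 -> continuous_B g2 ->
  IntB (fun u v => g1 u v + g2 u v) = IntB g1 + IntB g2.
Proof.
intros H1 H2. rewrite !IntB_IntSq by auto using continuous_B_plus.
rewrite <- IntSq_plus by (apply continuous2_disc_to_square; auto).
unfold IntSq. apply RInt_ext. intros u _. apply RInt_ext. intros w _.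
unfold disc_to_square; simpl; ring.
Qed.

Lemma IntB_scal k g : continuous_B g -> IntB (fun u v => k * g u v) = k * IntB g.
Proof.
intros H. rewrite !IntB_IntSq by auto using continuous_B_scal.
rewrite <- IntSq_scal by (apply continuous2_disc_to_square; auto).
unfold IntSq. apply RInt_ext. intros u _. apply RInt_ext. intros w _.
unfold disc_to_square; simpl; ring.
Qed.

Lemma IntB_ge0 g : continuous_B g -> (forall u v, inB u v -> 0 <= g u v) -> 0 <= IntB g.
Proof.
intros H Hp. rewrite IntB_IntSq by auto.
apply IntSq_ge0; [apply continuous2_disc_to_square; auto|].
intros u w _ _. unfold disc_to_square.
apply Rmult_le_pos; [apply half_chord_ge0 | apply Hp, inB_disc_to_square].
Qed.

Lemma IntB_ext g1 g2 : (forall u v, inB u v -> g1 u v = g2 u v) -> IntB g1 = IntB g2.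
Proof.
intros H. unfold IntB. apply RInt_ext. intros u Hu.
rewrite Rmin_left in Hu by lra. rewrite Rmax_right in Hu by lra.
apply RInt_ext. intros v Hv.
assert (Hs := sqrt_pos (1 - u ^ 2)).
rewrite Rmin_left in Hv by lra. rewrite Rmax_right in Hv by lra.
apply H. unfold inB.
assert (Hs2 : sqrt (1 - u ^ 2) * sqrt (1 - u ^ 2) = 1 - u ^ 2) by (apply sqrt_sqrt; nra).
nra.
Qed.

(** * Finite sums and dot products *)

Definition sumf (l : list nat) (f : nat -> R) : R := fold_right Rplus 0 (map f l).

Lemma sumf_ext l f g : (forall j, In j l -> f j = g j) -> sumf l f = sumf l g.
Proof.
induction l as [|a l IH]; intros H; unfold sumf in *; simpl; auto.
rewrite H by (simpl; auto). f_equal. apply IH. intros j Hj; apply H; simpl; auto.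
Qed.

Lemma sumf_plus l f g : sumf l (fun j => f j + g j) = sumf l f + sumf l g.
Proof. induction l as [|a l IH]; unfold sumf in *; simpl; [ring | rewrite IH; ring]. Qed.

Lemma sumf_scal l x f : sumf l (fun j => x * f j) = x * sumf l f.
Proof. induction l as [|a l IH]; unfold sumf in *; simpl; [ring | rewrite IH; ring]. Qed.

Lemma sumf_const l c : sumf l (fun _ => c) = INR (length l) * c.
Proof.
induction l as [|a l IH]; unfold sumf in *; simpl; [ring|].
rewrite IH. destruct (length l); simpl; ring.
Qed.

Lemma sumf_zero l f : (forall j, In j l -> f j = 0) -> sumf l f = 0.
Proof. intros H. rewrite (sumf_ext l f (fun _ => 0)), sumf_const; auto. ring. Qed.

Lemma sumf_ge0 l f : (forall j, In j l -> 0 <= f j) -> 0 <= sumf l f.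
Proof.
induction l as [|a l IH]; intros H; unfold sumf in *; simpl; [lra|].
apply Rplus_le_le_0_compat; [apply H; simpl; auto|].
apply IH. intros; apply H; simpl; auto.
Qed.

Lemma sumf_le l f g : (forall j, In j l -> f j <= g j) -> sumf l f <= sumf l g.
Proof.
induction l as [|a l IH]; intros H; unfold sumf in *; simpl; [lra|].
apply Rplus_le_compat; [apply H; simpl; auto | apply IH; intros; apply H; simpl; auto].
Qed.

Lemma sumf_shift a m f : sumf (seq (S a) m) f = sumf (seq a m) (fun i => f (S i)).
Proof.
revert a. induction m as [|m IH]; intros a; unfold sumf in *; simpl; auto.
rewrite IH. reflexivity.
Qed.

Lemma continuous_B_sumf (l : list nat) (g : nat -> R -> R -> R) :
  (forall s, In s l -> continuous_B (g s)) -> continuous_B (fun u v => sumf l (fun s => g s u v)).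
Proof.
induction l as [|a l IH]; intros H u v Huv; simpl.
- apply continuous_Rconst.
- apply (continuous_Rplus (uncurry2 (g a)) (uncurry2 (fun u v => sumf l (fun s => g s u v)))).
  + apply H; simpl; auto.
  + apply IH; auto. intros; apply H; simpl; auto.
Qed.

Lemma IntB_sumf (l : list nat) (g : nat -> R -> R -> R) :
  (forall s, In s l -> continuous_B (g s)) ->
  IntB (fun u v => sumf l (fun s => g s u v)) = sumf l (fun s => IntB (g s)).
Proof.
induction l as [|a l IH]; intros H.
- unfold IntB, sumf; simpl. rewrite (RInt_ext _ (fun _ => 0)).
  + rewrite RInt_const. apply Rmult_0_r.
  + intros u _. rewrite RInt_const. apply Rmult_0_r.
- change (IntB (fun u v => g a u v + sumf l (fun s => g s u v)) =
          IntB (g a) + sumf l (fun s => IntB (g s))).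
  assert (Hl : forall s, In s l -> continuous_B (g s)) by (intros; apply H; simpl; auto).
  rewrite IntB_plus, IH; auto using continuous_B_sumf. apply H; simpl; auto.
Qed.

Lemma in_seq0 n j : In j (seq 0 n) -> (j < n)%nat.
Proof. intros H. apply in_seq in H. lia. Qed.

Lemma dotn_sumf n a b : dotn n a b = sumf (seq 0 n) (fun j => a j * b j).
Proof. reflexivity. Qed.

Lemma dotn_ext n a a' b b' : (forall j, (j < n)%nat -> a j = a' j) ->
  (forall j, (j < n)%nat -> b j = b' j) -> dotn n a b = dotn n a' b'.
Proof.
intros Ha Hb. apply sumf_ext. intros j Hj. apply in_seq0 in Hj. rewrite Ha, Hb; auto.
Qed.

Lemma dotn_comm n a b : dotn n a b = dotn n b a.
Proof. apply sumf_ext. intros; ring. Qed.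

Lemma dotn_plusl n a b c : dotn n (fun j => a j + b j) c = dotn n a c + dotn n b c.
Proof. rewrite !dotn_sumf, <- sumf_plus. apply sumf_ext. intros; ring. Qed.

Lemma dotn_scall n k a b : dotn n (fun j => k * a j) b = k * dotn n a b.
Proof. rewrite !dotn_sumf, <- sumf_scal. apply sumf_ext. intros; ring. Qed.

Lemma dotn_plusr n a b c : dotn n c (fun j => a j + b j) = dotn n c a + dotn n c b.
Proof. rewrite !(dotn_comm n c). apply dotn_plusl. Qed.

Lemma dotn_scalr n k a b : dotn n a (fun j => k * b j) = k * dotn n a b.
Proof. rewrite !(dotn_comm n a). apply dotn_scall. Qed.

Lemma dotn_linl n x y a b c :
  dotn n (fun j => x * a j + y * b j) c = x * dotn n a c + y * dotn n b c.
Proof.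
rewrite (dotn_plusl n (fun j => x * a j) (fun j => y * b j)), !dotn_scall. reflexivity.
Qed.

Lemma dotn_linr n x y a b c :
  dotn n c (fun j => x * a j + y * b j) = x * dotn n c a + y * dotn n c b.
Proof. rewrite !(dotn_comm n c). apply dotn_linl. Qed.

Lemma dotn_expand n e A B C D :
  dotn n (fun j => A j + e * B j) (fun j => C j + e * D j) =
  dotn n A C + e * (dotn n A D + dotn n B C) + e ^ 2 * dotn n B D.
Proof.
rewrite (dotn_plusl n A (fun j => e * B j)), !dotn_plusr, !dotn_scall, !dotn_scalr. ring.
Qed.

Lemma continuous_sumf {T : UniformSpace} l (F : T -> nat -> R) x :
  (forall j, In j l -> continuous (fun p => F p j) x) -> continuous (fun p => sumf l (F p)) x.
Proof.
induction l as [|a l IH]; intros H; unfold sumf in *; simpl.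
- apply continuous_Rconst.
- apply (continuous_Rplus (fun p => F p a) (fun p => fold_right Rplus 0 (map (F p) l)));
    [apply H; simpl; auto | apply IH; intros; apply H; simpl; auto].
Qed.

Lemma continuous_dotn {T : UniformSpace} n (a b : T -> nat -> R) x :
  (forall j, (j < n)%nat -> continuous (fun p => a p j) x) ->
  (forall j, (j < n)%nat -> continuous (fun p => b p j) x) ->
  continuous (fun p => dotn n (a p) (b p)) x.
Proof.
intros Ha Hb. apply (continuous_sumf (seq 0 n) (fun p j => a p j * b p j)).
intros j Hj. apply in_seq0 in Hj. apply (continuous_Rmult (fun p => a p j) (fun p => b p j)); auto.
Qed.

Lemma is_derive_sumf l (F : R -> nat -> R) (dF : nat -> R) x :
  (forall j, In j l -> is_derive (fun t => F t j) x (dF j)) ->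
  is_derive (fun t => sumf l (F t)) x (sumf l dF).
Proof.
induction l as [|a l IH]; intros H; unfold sumf in *; simpl.
- apply (is_derive_const 0 x).
- apply (is_derive_plus (fun t => F t a) (fun t => fold_right Rplus 0 (map (F t) l)));
    [apply H; simpl; auto | apply IH; intros; apply H; simpl; auto].
Qed.

Lemma is_derive_dotn n (a b : R -> nat -> R) da db x :
  (forall j, (j < n)%nat -> is_derive (fun t => a t j) x (da j)) ->
  (forall j, (j < n)%nat -> is_derive (fun t => b t j) x (db j)) ->
  is_derive (fun t => dotn n (a t) (b t)) x (dotn n da (b x) + dotn n (a x) db).
Proof.
intros Ha Hb. rewrite !dotn_sumf, <- (sumf_plus (seq 0 n) (fun j => da j * b x j)).
apply (is_derive_sumf (seq 0 n) (fun t j => a t j * b t j)).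
intros j Hj. apply in_seq0 in Hj.
apply (is_derive_mult (fun t => a t j) (fun t => b t j)); auto.
intros; apply Rmult_comm.
Qed.

(** * Smoothness on the closed disc *)

Lemma inB_locally_2d (rho : R) u v : 1 < rho -> inB u v ->
  locally_2d (fun a b => a ^ 2 + b ^ 2 < rho ^ 2) u v.
Proof.
intros Hrho Huv. unfold inB in Huv.
assert (Hd : 0 < (rho - 1) / 4) by lra.
exists (mkposreal _ Hd). intros a b Ha Hb. simpl in Ha, Hb.
assert (Hu : Rabs u <= 1) by (apply Rabs_le; nra).
assert (Hv : Rabs v <= 1) by (apply Rabs_le; nra).
set (d := (rho - 1) / 4) in *.
assert (Ea : Rabs a <= Rabs u + d).
{ replace a with (u + (a - u)) by ring. eapply Rle_trans; [apply Rabs_triang | lra]. }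
assert (Eb : Rabs b <= Rabs v + d).
{ replace b with (v + (b - v)) by ring. eapply Rle_trans; [apply Rabs_triang | lra]. }
rewrite <- (pow2_abs a), <- (pow2_abs b).
rewrite <- (pow2_abs u), <- (pow2_abs v) in Huv.
assert (0 <= Rabs a) by apply Rabs_pos. assert (0 <= Rabs b) by apply Rabs_pos.
unfold d in *. nra.
Qed.

Lemma CkB_locally k f u v : CkB k f -> inB u v ->
  locally_2d (fun a b => forall l, (length l <= k)%nat ->
     continuous (uncurry2 (pds l f)) (a, b) /\
     ((length l < k)%nat -> ex_derive (fun t => pds l f t b) a /\
                            ex_derive (fun t => pds l f a t) b)) u v.
Proof.
intros [rho [Hrho Hck]] Huv.
generalize (inB_locally_2d rho u v Hrho Huv). apply locally_2d_impl.
apply locally_2d_forall. intros a b Hab l Hl. apply Hck; auto.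
Qed.

Lemma CkB_continuous k f l u v : CkB k f -> inB u v -> (length l <= k)%nat ->
  continuous (uncurry2 (pds l f)) (u, v).
Proof. intros H Huv Hl. apply (locally_2d_singleton _ _ _ (CkB_locally k f u v H Huv) l Hl). Qed.

Lemma CkB_ex_derive_u k f l u v : CkB k f -> inB u v -> (length l < k)%nat ->
  ex_derive (fun t => pds l f t v) u.
Proof.
intros H Huv Hl. apply (locally_2d_singleton _ _ _ (CkB_locally k f u v H Huv) l); auto. lia.
Qed.

Lemma CkB_ex_derive_v k f l u v : CkB k f -> inB u v -> (length l < k)%nat ->
  ex_derive (fun t => pds l f u t) v.
Proof.
intros H Huv Hl. apply (locally_2d_singleton _ _ _ (CkB_locally k f u v H Huv) l); auto. lia.
Qed.

Lemma CkB_Schwarz k f u v : (2 <= k)%nat -> CkB k f -> inB u v ->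
  pu (pv f) u v = pv (pu f) u v.
Proof.
intros Hk H Huv. unfold pu, pv.
apply Schwarz.
- generalize (CkB_locally k f u v H Huv). apply locally_2d_impl. apply locally_2d_forall.
  intros a b Hab. repeat split.
  + apply (Hab nil); simpl; lia.
  + apply (Hab nil); simpl; lia.
  + apply (Hab (true :: nil)); simpl; lia.
  + apply (Hab (false :: nil)); simpl; lia.
- apply continuity_2d_pt_filterlim. apply (CkB_continuous k f (false :: true :: nil)); auto.
- apply continuity_2d_pt_filterlim. apply (CkB_continuous k f (true :: false :: nil)); auto.
Qed.

Lemma CkBvec_continuous n X k l j u v : CkBvec k n X -> inB u v -> (j < n)%nat ->
  (length l <= k)%nat ->
  continuous (fun p : R * R => pds l (fun a b => X a b j) (fst p) (snd p)) (u, v).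
Proof. intros H Huv Hj Hl. apply (CkB_continuous k (fun a b => X a b j) l); auto. Qed.

Lemma CkBvec_is_derive_u n X k l j u v : CkBvec k n X -> inB u v -> (j < n)%nat ->
  (length l < k)%nat ->
  is_derive (fun t => pds l (fun a b => X a b j) t v) u
            (pu (pds l (fun a b => X a b j)) u v).
Proof. intros H Huv Hj Hl. apply Derive_correct, (CkB_ex_derive_u k); auto. Qed.

Lemma CkBvec_is_derive_v n X k l j u v : CkBvec k n X -> inB u v -> (j < n)%nat ->
  (length l < k)%nat ->
  is_derive (fun t => pds l (fun a b => X a b j) u t) v
            (pv (pds l (fun a b => X a b j)) u v).
Proof. intros H Huv Hj Hl. apply Derive_correct, (CkB_ex_derive_v k); auto. Qed.

Lemma C0inf_continuous phi l u v : C0inf phi ->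
  continuous (fun p : R * R => pds l phi (fst p) (snd p)) (u, v).
Proof. intros [H _]. exact (proj1 (H l u v)). Qed.

Lemma C0inf_ex_derive_u phi l u v : C0inf phi -> ex_derive (fun t => pds l phi t v) u.
Proof. intros [H _]. exact (proj1 (proj2 (H l u v))). Qed.

Lemma C0inf_ex_derive_v phi l u v : C0inf phi -> ex_derive (fun t => pds l phi u t) v.
Proof. intros [H _]. exact (proj2 (proj2 (H l u v))). Qed.

Lemma C0inf_boundary phi u v : C0inf phi -> inB u v -> 1 <= u ^ 2 + v ^ 2 ->
  phi u v = 0 /\ pu phi u v = 0 /\ pv phi u v = 0.
Proof.
intros [_ [r [Hr Hz]]] Huv H1. unfold inB in Huv.
assert (Hd : 0 < (1 - r ^ 2) / 8) by nra.
assert (Hnear : forall x t, Rabs x <= 1 -> Rabs (t - x) < (1 - r ^ 2) / 8 ->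
          x ^ 2 - (1 - r ^ 2) / 4 <= t ^ 2).
{ intros x t Hx Ht.
  assert (Rabs (x * (t - x)) <= (1 - r ^ 2) / 8).
  { rewrite Rabs_mult. assert (0 <= Rabs (t - x)) by apply Rabs_pos. nra. }
  apply Rabs_le_between in H. nra. }
split; [|split].
- apply Hz. nra.
- unfold pu. rewrite (Derive_ext_loc _ (fun _ => 0)) by
    (exists (mkposreal _ Hd); intros t Ht; apply Hz;
     assert (Hn := Hnear u t ltac:(apply Rabs_le; nra) Ht); nra).
  apply Derive_const.
- unfold pv. rewrite (Derive_ext_loc _ (fun _ => 0)) by
    (exists (mkposreal _ Hd); intros t Ht; apply Hz;
     assert (Hn := Hnear v t ltac:(apply Rabs_le; nra) Ht); nra).
  apply Derive_const.
Qed.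

Lemma locally_inB_u u v : u ^ 2 + v ^ 2 < 1 -> locally u (fun t => inB t v).
Proof.
intros H. assert (Hd : 0 < 1 - u ^ 2 - v ^ 2) by lra.
set (d := Rmin 1 ((1 - u ^ 2 - v ^ 2) / 4)).
assert (Hd0 : 0 < d) by (apply Rmin_glb_lt; lra).
exists (mkposreal _ Hd0). intros t Ht. change (Rabs (t - u) < d) in Ht.
assert (H1 := Rmin_l 1 ((1 - u ^ 2 - v ^ 2) / 4)).
assert (H2 := Rmin_r 1 ((1 - u ^ 2 - v ^ 2) / 4)). fold d in H1, H2.
assert (Hu : Rabs u <= 1) by (apply Rabs_le; nra).
assert (Rabs t <= Rabs u + d).
{ replace t with (u + (t - u)) by ring. eapply Rle_trans; [apply Rabs_triang | lra]. }
assert (Rabs t ^ 2 <= (Rabs u + d) ^ 2) by (apply pow_incr; split; [apply Rabs_pos | auto]).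
assert (Rabs u * d <= d) by (apply Rmult_le_compat_r with (r := d) in Hu; lra).
assert (d * d <= d) by (apply Rmult_le_compat_r with (r := d) in H1; lra).
unfold inB. rewrite <- (pow2_abs t). rewrite <- (pow2_abs u) in H2. nra.
Qed.

Lemma locally_inB_v u v : u ^ 2 + v ^ 2 < 1 -> locally v (fun t => inB u t).
Proof.
intros H. generalize (locally_inB_u v u ltac:(lra)). apply filter_imp. unfold inB. intros; lra.
Qed.

Module Parseval.
From mathcomp Require Import all_boot all_algebra.
From mathcomp Require Import Rstruct ring.
Import GRing.Theory.
Local Open Scope ring_scope.

Lemma fold_sum (f : nat -> R) (l : list nat) :
  fold_right Rplus R0 (List.map f l) = (\sum_(i <- l) f i)%R.
Proof. by elim: l => [|a l IH] /=; [rewrite big_nil | rewrite big_cons IH]. Qed.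

Lemma seq_iota m n : List.seq m n = iota m n.
Proof. by elim: n m => [|n IH] m //=; rewrite IH. Qed.

Lemma fold_sum_ord (f : nat -> R) n :
  fold_right Rplus R0 (List.map f (List.seq 0 n)) = (\sum_(i < n) f i)%R.
Proof. by rewrite fold_sum seq_iota -(big_mkord xpredT f) /index_iota subn0. Qed.

Lemma dotn_sum n a b : dotn n a b = (\sum_(i < n) a i * b i)%R.
Proof. by rewrite /dotn fold_sum_ord. Qed.

(* n orthonormal vectors of R^n form a square matrix M with M M^T = 1, hence
   also M^T M = 1: they are a basis, and Parseval's identity holds. *)
Lemma parseval n (e : nat -> nat -> R) (x : nat -> R) :
  (forall i j, Peano.lt i n -> Peano.lt j n ->
     dotn n (e i) (e j) = if Nat.eqb i j then R1 else R0) ->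
  dotn n x x = fold_right Rplus R0 (List.map (fun i => pow (dotn n x (e i)) 2) (List.seq 0 n)).
Proof.
move=> He.
pose M : 'M[R]_n := \matrix_(i < n, j < n) e i j.
have HM : (M *m M^T)%R = 1%:M%R.
  apply/matrixP => i j; rewrite !mxE.
  have := He i j (ltP (ltn_ord i)) (ltP (ltn_ord j)).
  rewrite dotn_sum => H.
  transitivity (if Nat.eqb i j then R1 else R0); last first.
    case: (Nat.eqb_spec i j) => [/val_inj ->|Hne]; first by rewrite eqxx.
    by case: eqP => // Hij; case: Hne; rewrite Hij.
  rewrite -H; apply: eq_bigr => k _; by rewrite !mxE.
have HM2 := mulmx1C HM.
rewrite fold_sum_ord dotn_sum.
transitivity (\sum_(k < n) \sum_(l < n) x k * x l * (M^T *m M)%R k l)%R.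
  apply: eq_bigr => k _.
  rewrite HM2 (bigD1 k) //= big1; last first.
    by move=> l /negbTE Hl; rewrite mxE eq_sym Hl mulr0.
  by rewrite mxE eqxx /= mulr1 addr0.
transitivity (\sum_(i < n) (\sum_(k < n) x k * e i k) * (\sum_(l < n) x l * e i l))%R;
  last first.
  apply: eq_bigr => i _; rewrite dotn_sum /=.
  by rewrite /pow Rmult_1_r.
rewrite exchange_big /=.
transitivity (\sum_(k < n) \sum_(i < n) \sum_(l < n) (x k * e i k) * (x l * e i l))%R.
  apply: eq_bigr => k _.
  rewrite exchange_big /=.
  apply: eq_bigr => l _.
  rewrite !mxE big_distrr /=.
  apply: eq_bigr => i _; rewrite !mxE.
  ring.
rewrite exchange_big /=; apply: eq_bigr => i _.
rewrite big_distrl /=.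
apply: eq_bigr => k _.
by rewrite big_distrr.
Qed.
End Parseval.

Lemma dotn_self_frame n (A B x : nat -> R) (M : nat -> nat -> R) w :
  (2 <= n)%nat -> 0 < w -> dotn n A A = w -> dotn n B B = w -> dotn n A B = 0 ->
  (forall k, (k < n - 2)%nat -> dotn n A (M k) = 0 /\ dotn n B (M k) = 0) ->
  (forall k l, (k < n - 2)%nat -> (l < n - 2)%nat ->
     dotn n (M k) (M l) = if Nat.eqb k l then 1 else 0) ->
  dotn n x x = (dotn n x A) ^ 2 / w + (dotn n x B) ^ 2 / w
               + sumf (seq 0 (n - 2)) (fun k => (dotn n x (M k)) ^ 2).
Proof.
intros Hn Hw HA HB HAB HM HMM.
assert (Hs : 0 < sqrt w) by (apply sqrt_lt_R0; auto).
assert (Hss : sqrt w * sqrt w = w) by (apply sqrt_sqrt; lra).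
set (s := sqrt w) in *.
set (e := fun i => match i with
   | O => fun j => / s * A j
   | S O => fun j => / s * B j
   | S (S k) => M k end).
assert (He : forall i j, (i < n)%nat -> (j < n)%nat ->
          dotn n (e i) (e j) = if Nat.eqb i j then R1 else R0).
{ intros i j Hi Hj.
  destruct i as [|[|i]]; destruct j as [|[|j]]; simpl e; simpl Nat.eqb;
    rewrite ?dotn_scall, ?dotn_scalr.
  - rewrite HA, <- Hss. field. lra.
  - rewrite HAB. ring.
  - rewrite (proj1 (HM j ltac:(lia))). ring.
  - rewrite dotn_comm, HAB. ring.
  - rewrite HB, <- Hss. field. lra.
  - rewrite (proj2 (HM j ltac:(lia))). ring.
  - rewrite dotn_comm, (proj1 (HM i ltac:(lia))). ring.
  - rewrite dotn_comm, (proj2 (HM i ltac:(lia))). ring.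
  - apply HMM; lia. }
rewrite (Parseval.parseval n e x He).
replace (seq 0 n) with (0%nat :: 1%nat :: seq 2 (n - 2))
  by (destruct n as [|[|m]]; [lia | lia | simpl; rewrite Nat.sub_0_r; reflexivity]).
change (fold_right Rplus R0 (map (fun i => dotn n x (e i) ^ 2) (0%nat :: 1%nat :: seq 2 (n - 2))))
  with (dotn n x (e 0%nat) ^ 2 +
        (dotn n x (e 1%nat) ^ 2 + sumf (seq 2 (n - 2)) (fun i => dotn n x (e i) ^ 2))).
rewrite !sumf_shift. simpl e. rewrite !dotn_scalr.
replace ((/ s * dotn n x A) ^ 2) with (dotn n x A ^ 2 / w) by (rewrite <- Hss; field; lra).
replace ((/ s * dotn n x B) ^ 2) with (dotn n x B ^ 2 / w) by (rewrite <- Hss; field; lra).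
ring.
Qed.

(** * The second variation of area *)

(* The area element sqrt (E G - F^2) of a variation is the square root of a
   polynomial in eps; c lists the coefficients of E, G and F in this order. *)
Definition gramE (c : nat -> R) e := c 0%nat + c 1%nat * e + c 2%nat * e ^ 2.
Definition gramG (c : nat -> R) e := c 3%nat + c 4%nat * e + c 5%nat * e ^ 2.
Definition gramF (c : nat -> R) e := c 6%nat + c 7%nat * e + c 8%nat * e ^ 2.
Definition gram c e := gramE c e * gramG c e - gramF c e ^ 2.
Definition gram_d1 c e :=
  (c 1%nat + 2 * c 2%nat * e) * gramG c e + gramE c e * (c 4%nat + 2 * c 5%nat * e)
  - 2 * gramF c e * (c 7%nat + 2 * c 8%nat * e).
Definition gram_d2 c e :=
  2 * c 2%nat * gramG c e + 2 * (c 1%nat + 2 * c 2%nat * e) * (c 4%nat + 2 * c 5%nat * e)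
  + 2 * c 5%nat * gramE c e - 2 * (c 7%nat + 2 * c 8%nat * e) ^ 2 - 4 * c 8%nat * gramF c e.
Definition area_d1 c e := gram_d1 c e / (2 * sqrt (gram c e)).
Definition area_d2 c e :=
  gram_d2 c e / (2 * sqrt (gram c e)) - gram_d1 c e ^ 2 / (4 * gram c e * sqrt (gram c e)).

Lemma is_derive_gram c e : is_derive (gram c) e (gram_d1 c e).
Proof. unfold gram, gram_d1, gramE, gramG, gramF. auto_derive; auto. ring. Qed.

Lemma is_derive_gram_d1 c e : is_derive (gram_d1 c) e (gram_d2 c e).
Proof. unfold gram_d2, gram_d1, gramE, gramG, gramF. auto_derive; auto. ring. Qed.

Lemma is_derive_sqrt_gram c e : 0 < gram c e ->
  is_derive (fun x => sqrt (gram c x)) e (area_d1 c e).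
Proof. intros H. apply is_derive_sqrt; auto using is_derive_gram. Qed.

Lemma is_derive_area_d1 c e : 0 < gram c e -> is_derive (area_d1 c) e (area_d2 c e).
Proof.
intros H.
assert (Hs : 0 < sqrt (gram c e)) by (apply sqrt_lt_R0; exact H).
assert (Hss : sqrt (gram c e) * sqrt (gram c e) = gram c e) by (apply sqrt_sqrt; lra).
replace (area_d2 c e) with
  ((gram_d2 c e * (2 * sqrt (gram c e)) - gram_d1 c e * (2 * area_d1 c e))
   / (2 * sqrt (gram c e)) ^ 2).
- apply (is_derive_div (gram_d1 c) (fun t => 2 * sqrt (gram c t)) e);
    [apply is_derive_gram_d1 | | lra].
  apply (is_derive_scal (fun x => sqrt (gram c x))), is_derive_sqrt_gram; auto.
- unfold area_d2, area_d1.
  replace (4 * gram c e * sqrt (gram c e))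
    with (4 * (sqrt (gram c e) * sqrt (gram c e)) * sqrt (gram c e)) by (rewrite Hss; ring).
  set (s := sqrt (gram c e)) in *. field. lra.
Qed.

Lemma area_d2_conformal (c : nat -> R) w : 0 < w ->
  c 0%nat = w -> c 3%nat = w -> c 6%nat = 0 -> c 1%nat + c 4%nat = 0 ->
  area_d2 c 0 = c 2%nat + c 5%nat + (c 1%nat * c 4%nat - c 7%nat ^ 2) / w.
Proof.
intros Hw H0 H3 H6 H14.
assert (Hg : gram c 0 = w * w) by (unfold gram, gramE, gramG, gramF; rewrite H0, H3, H6; ring).
assert (Hg1 : gram_d1 c 0 = w * (c 1%nat + c 4%nat))
  by (unfold gram_d1, gramE, gramG, gramF; rewrite H0, H3, H6; ring).
unfold area_d2. rewrite Hg, Hg1, H14, sqrt_square by lra.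
unfold gram_d2, gramE, gramG, gramF. rewrite H0, H3, H6. field. lra.
Qed.

Section GramContinuity.
Context {T : UniformSpace} (cf : nat -> T -> R) (ef : T -> R) (x : T).
Hypothesis Hcf : forall i, continuous (cf i) x.
Hypothesis Hef : continuous ef x.

Let gram_at z := gram (fun i => cf i z) (ef z).

Lemma continuous_gram : continuous gram_at x.
Proof. unfold gram_at, gram, gramE, gramG, gramF. continuity_R; auto. Qed.

Lemma continuous_sqrt_gram : continuous (fun z => sqrt (gram_at z)) x.
Proof. apply continuous_Rsqrt, continuous_gram. Qed.

Hypothesis Hpos : 0 < gram_at x.

Lemma continuous_area_d1 : continuous (fun z => area_d1 (fun i => cf i z) (ef z)) x.
Proof.
assert (0 < sqrt (gram_at x)) by (apply sqrt_lt_R0; auto).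
apply continuous_Rdiv; [| |fold (gram_at x); lra].
- unfold gram_d1, gramE, gramG, gramF. continuity_R; auto.
- continuity_R. apply continuous_sqrt_gram.
Qed.

Lemma continuous_area_d2 : continuous (fun z => area_d2 (fun i => cf i z) (ef z)) x.
Proof.
assert (0 < sqrt (gram_at x)) by (apply sqrt_lt_R0; auto).
apply continuous_Rminus; (apply continuous_Rdiv; [| |fold (gram_at x); nra]).
- unfold gram_d2, gramE, gramG, gramF. continuity_R; auto.
- continuity_R. apply continuous_sqrt_gram.
- unfold gram_d1, gramE, gramG, gramF. continuity_R; auto.
- continuity_R; [apply continuous_gram | apply continuous_sqrt_gram].
Qed.

End GramContinuity.

Lemma square_uniform_pos (F : R -> R -> R -> R) :
  (forall u w, -1 <= u <= 1 -> -1 <= w <= 1 -> continuous3 F 0 u w /\ 0 < F 0 u w) ->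
  exists d : posreal, forall e u w, Rabs e < d -> -1 <= u <= 1 -> -1 <= w <= 1 -> 0 < F e u w.
Proof.
intros H.
assert (Hd : forall u w, exists d : posreal, -1 <= u <= 1 -> -1 <= w <= 1 ->
  forall e u' w', Rabs e < d -> Rabs (u' - u) < d -> Rabs (w' - w) < d -> 0 < F e u' w').
{ intros u w. destruct (classic (-1 <= u <= 1 /\ -1 <= w <= 1)) as [[Hu Hw]|Hn].
  - destruct (H u w Hu Hw) as [Hc Hp].
    unfold continuous3, continuous in Hc. rewrite filterlim_locally in Hc.
    destruct (Hc (mkposreal _ Hp)) as [d Hd].
    exists d. intros _ _ e u' w' He Hu' Hw'.
    assert (B : Rabs (F e u' w' - F 0 u w) < F 0 u w).
    { apply (Hd ((e, u'), w')). split; [split|]; auto.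
      change (Rabs (e - 0) < d). rewrite Rminus_0_r. exact He. }
    apply Rabs_def2 in B. lra.
  - exists (mkposreal 1 Rlt_0_1). intros Hu Hw. exfalso. apply Hn; auto. }
assert (Hd' : forall u, exists du : R -> posreal, forall w, -1 <= u <= 1 -> -1 <= w <= 1 ->
  forall e u' w', Rabs e < du w -> Rabs (u' - u) < du w -> Rabs (w' - w) < du w ->
  0 < F e u' w').
{ intros u. destruct (choice _ (Hd u)) as [du Hdu]. exists du. exact Hdu. }
destruct (choice _ Hd') as [df Hdf].
destruct (compactness_value_2d (-1) 1 (-1) 1 df) as [d Hcomp].
exists d. intros e u' w' He Hu' Hw'.
specialize (Hcomp u' w' Hu' Hw').
destruct (classic (0 < F e u' w')) as [G|G]; [exact G|]. exfalso.
apply Hcomp. intros [u [w [Hu [Hw [H1 [H2 H3]]]]]].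
apply G. apply (Hdf u w Hu Hw); auto. lra.
Qed.

Lemma continuous_fst_fst (e u w : R) :
  continuous (fun z : (R * R) * R => fst (fst z)) ((e, u), w).
Proof. apply (continuous_comp fst fst); apply continuous_fst. Qed.

Lemma continuous_half_chord_fst (e u w : R) :
  continuous (fun z : (R * R) * R => half_chord (snd (fst z))) ((e, u), w).
Proof.
apply (continuous_comp (fun z : (R * R) * R => snd (fst z)) half_chord).
- apply (continuous_comp fst snd); [apply continuous_fst | apply continuous_snd].
- apply continuous_half_chord.
Qed.

Section SecondDerivative.
Variable c : nat -> R -> R -> R.
Hypothesis Hc : forall i, continuous_B (c i).
Hypothesis Hpos : forall u v, inB u v -> 0 < gram (fun i => c i u v) 0.

Let c_sq (u w : R) (i : nat) : R := c i (clamp u) (half_chord u * clamp w).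

Lemma continuous_c_sq i e u w :
  continuous (fun z : (R * R) * R => c_sq (snd (fst z)) (snd z) i) ((e, u), w).
Proof.
apply (continuous_B_comp_square (c i) (fun z : (R * R) * R => snd (fst z)) snd).
- apply Hc.
- apply (continuous_comp fst snd); [apply continuous_fst | apply continuous_snd].
- apply continuous_snd.
Qed.

Lemma gram_pos_uniform :
  exists d : posreal, forall e u w, Rabs e < d -> 0 < gram (c_sq u w) e.
Proof.
destruct (square_uniform_pos (fun e u w => gram (c_sq u w) e)) as [d Hd].
{ intros u w Hu Hw. split.
  - apply (continuous_gram (fun i z => c_sq (snd (fst z)) (snd z) i) (fun z => fst (fst z)));
      auto using continuous_c_sq, continuous_fst_fst.
  - apply Hpos, inB_disc_to_square. }
exists d. intros e u w He.
replace (c_sq u w) with (c_sq (clamp u) (clamp w))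
  by (unfold c_sq; rewrite !clamp_idem, half_chord_clamp; reflexivity).
apply Hd; auto using clamp_bound.
Qed.

Lemma continuous_B_sqrt_gram e : continuous_B (fun u v => sqrt (gram (fun i => c i u v) e)).
Proof.
intros u v Huv.
apply (continuous_sqrt_gram (fun i (p : R * R) => c i (fst p) (snd p)) (fun _ => e));
  auto using continuous_Rconst.
intros i; apply Hc; auto.
Qed.

Lemma continuous_B_area_d2 : continuous_B (fun u v => area_d2 (fun i => c i u v) 0).
Proof.
intros u v Huv.
apply (continuous_area_d2 (fun i (p : R * R) => c i (fst p) (snd p)) (fun _ => 0));
  auto using continuous_Rconst.
intros i; apply Hc; auto.
Qed.

Lemma Derive_2_IntB_sqrt_gram :
  Derive_n (fun e => IntB (fun u v => sqrt (gram (fun i => c i u v) e))) 2 0 =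
  IntB (fun u v => area_d2 (fun i => c i u v) 0).
Proof.
destruct gram_pos_uniform as [d Hd].
set (G := fun e u w => half_chord u * sqrt (gram (c_sq u w) e)).
set (G1 := fun e u w => half_chord u * area_d1 (c_sq u w) e).
set (G2 := fun e u w => half_chord u * area_d2 (c_sq u w) e).
assert (Hcf := continuous_c_sq). assert (Hef := continuous_fst_fst).
assert (HG : forall e u w, Rabs e < d -> continuous3 G e u w).
{ intros e u w He. apply continuous_Rmult; [apply continuous_half_chord_fst|].
  apply (continuous_sqrt_gram (fun i z => c_sq (snd (fst z)) (snd z) i)); auto. }
assert (HG1 : forall e u w, Rabs e < d -> continuous3 G1 e u w).
{ intros e u w He. apply continuous_Rmult; [apply continuous_half_chord_fst|].
  apply (continuous_area_d1 (fun i z => c_sq (snd (fst z)) (snd z) i)); auto. }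
assert (HG2 : forall e u w, Rabs e < d -> continuous3 G2 e u w).
{ intros e u w He. apply continuous_Rmult; [apply continuous_half_chord_fst|].
  apply (continuous_area_d2 (fun i z => c_sq (snd (fst z)) (snd z) i)); auto. }
assert (HD1 : forall e u w, Rabs e < d -> is_derive (fun x => G x u w) e (G1 e u w)).
{ intros e u w He. apply is_derive_scal, is_derive_sqrt_gram; auto. }
assert (HD2 : forall e u w, Rabs e < d -> is_derive (fun x => G1 x u w) e (G2 e u w)).
{ intros e u w He. apply is_derive_scal, is_derive_area_d1; auto. }
assert (HA : forall e, IntB (fun u v => sqrt (gram (fun i => c i u v) e)) = IntSq (G e)).
{ intros e. apply IntB_IntSq, continuous_B_sqrt_gram. }
assert (Hd0 : Rabs 0 < d) by (rewrite Rabs_R0; apply cond_pos).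
rewrite IntB_IntSq by apply continuous_B_area_d2. simpl.
rewrite (Derive_ext_loc _ (fun e => IntSq (G1 e))).
- apply is_derive_unique, (is_derive_IntSq G1 G2 d 0); auto.
- generalize (locally_Rabs_lt d 0 Hd0). apply filter_imp. intros e He.
  rewrite (Derive_ext _ (fun e => IntSq (G e))) by apply HA.
  apply is_derive_unique, (is_derive_IntSq G G1 d e); auto.
Qed.

End SecondDerivative.

Definition dvar_u (N : R -> R -> nat -> R) (phi : R -> R -> R) u v : nat -> R :=
  fun j => pu phi u v * N u v j + phi u v * Vu N u v j.
Definition dvar_v (N : R -> R -> nat -> R) (phi : R -> R -> R) u v : nat -> R :=
  fun j => pv phi u v * N u v j + phi u v * Vv N u v j.

Definition area_coef n X N phi (i : nat) (u v : R) : R :=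
  match i with
  | 0%nat => dotn n (Vu X u v) (Vu X u v)
  | 1%nat => dotn n (Vu X u v) (dvar_u N phi u v) + dotn n (dvar_u N phi u v) (Vu X u v)
  | 2%nat => dotn n (dvar_u N phi u v) (dvar_u N phi u v)
  | 3%nat => dotn n (Vv X u v) (Vv X u v)
  | 4%nat => dotn n (Vv X u v) (dvar_v N phi u v) + dotn n (dvar_v N phi u v) (Vv X u v)
  | 5%nat => dotn n (dvar_v N phi u v) (dvar_v N phi u v)
  | 6%nat => dotn n (Vu X u v) (Vv X u v)
  | 7%nat => dotn n (Vu X u v) (dvar_v N phi u v) + dotn n (dvar_u N phi u v) (Vv X u v)
  | 8%nat => dotn n (dvar_u N phi u v) (dvar_v N phi u v)
  | _ => 0
  end.

Lemma is_derive_vary (x n p : R -> R) (e t dx dn dp : R) :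
  is_derive x t dx -> is_derive p t dp -> is_derive n t dn ->
  is_derive (fun s => x s + e * p s * n s) t (dx + e * (dp * n t + p t * dn)).
Proof.
intros Hx Hp Hn.
replace (dx + e * (dp * n t + p t * dn)) with (dx + ((e * dp) * n t + (e * p t) * dn)) by ring.
apply (is_derive_plus x); auto.
apply (is_derive_mult (fun s => e * p s) n); auto using is_derive_scal.
intros; apply Rmult_comm.
Qed.

Section Variation.
Variables (n : nat) (X N : R -> R -> nat -> R) (phi : R -> R -> R).
Hypothesis HX : CkBvec 3 n X.
Hypothesis HN : CkBvec 2 n N.
Hypothesis Hphi : C0inf phi.

Lemma Vu_vary e u v j : inB u v -> (j < n)%nat ->
  Vu (vary X e phi N) u v j = Vu X u v j + e * dvar_u N phi u v j.
Proof.
intros Huv Hj. apply is_derive_unique. unfold vary.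
apply (is_derive_vary (fun t => X t v j) (fun t => N t v j) (fun t => phi t v)).
- apply (CkBvec_is_derive_u n X 3 nil); simpl; auto; lia.
- apply Derive_correct, (C0inf_ex_derive_u phi nil); auto.
- apply (CkBvec_is_derive_u n N 2 nil); simpl; auto; lia.
Qed.

Lemma Vv_vary e u v j : inB u v -> (j < n)%nat ->
  Vv (vary X e phi N) u v j = Vv X u v j + e * dvar_v N phi u v j.
Proof.
intros Huv Hj. apply is_derive_unique. unfold vary.
apply (is_derive_vary (fun t => X u t j) (fun t => N u t j) (fun t => phi u t)).
- apply (CkBvec_is_derive_v n X 3 nil); simpl; auto; lia.
- apply Derive_correct, (C0inf_ex_derive_v phi nil); auto.
- apply (CkBvec_is_derive_v n N 2 nil); simpl; auto; lia.
Qed.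

Lemma Area_vary_integrand e u v : inB u v ->
  sqrt (dotn n (Vu (vary X e phi N) u v) (Vu (vary X e phi N) u v) *
        dotn n (Vv (vary X e phi N) u v) (Vv (vary X e phi N) u v) -
        (dotn n (Vu (vary X e phi N) u v) (Vv (vary X e phi N) u v)) ^ 2)
  = sqrt (gram (fun i => area_coef n X N phi i u v) e).
Proof.
intros Huv.
assert (Hu := fun j => Vu_vary e u v j Huv). assert (Hv := fun j => Vv_vary e u v j Huv).
rewrite (dotn_ext n _ _ _ _ Hu Hu), (dotn_ext n _ _ _ _ Hv Hv), (dotn_ext n _ _ _ _ Hu Hv).
rewrite !dotn_expand. f_equal. unfold gram, gramE, gramG, gramF, area_coef. ring.
Qed.

Lemma continuous_dvar_u u v j : inB u v -> (j < n)%nat ->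
  continuous (fun p : R * R => dvar_u N phi (fst p) (snd p) j) (u, v).
Proof.
intros Huv Hj. unfold dvar_u.
apply continuous_Rplus; apply continuous_Rmult.
- apply (C0inf_continuous phi (false :: nil)); auto.
- apply (CkBvec_continuous n N 2 nil); simpl; auto; lia.
- apply (C0inf_continuous phi nil); auto.
- apply (CkBvec_continuous n N 2 (false :: nil)); simpl; auto; lia.
Qed.

Lemma continuous_dvar_v u v j : inB u v -> (j < n)%nat ->
  continuous (fun p : R * R => dvar_v N phi (fst p) (snd p) j) (u, v).
Proof.
intros Huv Hj. unfold dvar_v.
apply continuous_Rplus; apply continuous_Rmult.
- apply (C0inf_continuous phi (true :: nil)); auto.
- apply (CkBvec_continuous n N 2 nil); simpl; auto; lia.
- apply (C0inf_continuous phi nil); auto.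
- apply (CkBvec_continuous n N 2 (true :: nil)); simpl; auto; lia.
Qed.

Lemma continuous_B_area_coef i : continuous_B (area_coef n X N phi i).
Proof.
intros u v Huv.
assert (A : forall j, (j < n)%nat -> continuous (fun p : R * R => Vu X (fst p) (snd p) j) (u, v))
  by (intros j Hj; apply (CkBvec_continuous n X 3 (false :: nil)); simpl; auto; lia).
assert (B : forall j, (j < n)%nat -> continuous (fun p : R * R => Vv X (fst p) (snd p) j) (u, v))
  by (intros j Hj; apply (CkBvec_continuous n X 3 (true :: nil)); simpl; auto; lia).
assert (C := fun j => continuous_dvar_u u v j Huv).
assert (D := fun j => continuous_dvar_v u v j Huv).
unfold uncurry2.
destruct i as [|[|[|[|[|[|[|[|[|i]]]]]]]]]; simpl;
  first [ apply continuous_Rconst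
        | apply continuous_dotn; auto
        | apply continuous_Rplus; apply continuous_dotn; auto ].
Qed.

Hypothesis Hconf : forall u v, inB u v ->
  0 < Wf n X u v /\ dotn n (Vv X u v) (Vv X u v) = Wf n X u v /\ dotn n (Vu X u v) (Vv X u v) = 0.

Lemma Derive_2_Area_vary :
  Derive_n (fun e => Area n (vary X e phi N)) 2 0 =
  IntB (fun u v => area_d2 (fun i => area_coef n X N phi i u v) 0).
Proof.
rewrite <- (Derive_2_IntB_sqrt_gram (area_coef n X N phi)).
- apply Derive_n_ext. intros e. apply IntB_ext. intros u v Huv. apply Area_vary_integrand; auto.
- apply continuous_B_area_coef.
- intros u v Huv. destruct (Hconf u v Huv) as [W1 [W2 W3]].
  unfold gram, gramE, gramG, gramF, area_coef. unfold Wf in *. rewrite W2, W3. nra.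
Qed.

End Variation.

(** * A flat minimal surface *)

Lemma dotn_const_derive_u n (A B : R -> R -> nat -> R) (dA dB : nat -> R) k u v :
  (forall a b, inB a b -> dotn n (A a b) (B a b) = k) -> u ^ 2 + v ^ 2 < 1 ->
  (forall j, (j < n)%nat -> is_derive (fun t => A t v j) u (dA j)) ->
  (forall j, (j < n)%nat -> is_derive (fun t => B t v j) u (dB j)) ->
  dotn n dA (B u v) + dotn n (A u v) dB = 0.
Proof.
intros H Huv HA HB.
rewrite <- (is_derive_unique _ _ _ (is_derive_dotn n (fun t => A t v) (fun t => B t v) _ _ u HA HB)).
rewrite (Derive_ext_loc _ (fun _ => k)); [apply Derive_const|].
generalize (locally_inB_u u v Huv). apply filter_imp. intros t Ht. apply H; auto.
Qed.

Lemma dotn_const_derive_v n (A B : R -> R -> nat -> R) (dA dB : nat -> R) k u v :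
  (forall a b, inB a b -> dotn n (A a b) (B a b) = k) -> u ^ 2 + v ^ 2 < 1 ->
  (forall j, (j < n)%nat -> is_derive (fun t => A u t j) v (dA j)) ->
  (forall j, (j < n)%nat -> is_derive (fun t => B u t j) v (dB j)) ->
  dotn n dA (B u v) + dotn n (A u v) dB = 0.
Proof.
intros H Huv HA HB.
rewrite <- (is_derive_unique _ _ _ (is_derive_dotn n (fun t => A u t) (fun t => B u t) _ _ v HA HB)).
rewrite (Derive_ext_loc _ (fun _ => k)); [apply Derive_const|].
generalize (locally_inB_v u v Huv). apply filter_imp. intros t Ht. apply H; auto.
Qed.

Section UnitNormal.
Variables (n : nat) (X N : R -> R -> nat -> R).
Hypothesis HX : CkBvec 3 n X.
Hypothesis HN : CkBvec 2 n N.
Hypothesis Hnormal : forall u v, inB u v ->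
  dotn n (Vu X u v) (N u v) = 0 /\ dotn n (Vv X u v) (N u v) = 0.
Hypothesis Hunit : forall u v, inB u v -> dotn n (N u v) (N u v) = 1.

Lemma area_coef_unit_normal phi u v : inB u v ->
  let f := phi u v in let a := pu phi u v in let b := pv phi u v in
  let Xu := Vu X u v in let Xv := Vv X u v in let Nu := Vu N u v in let Nv := Vv N u v in
  area_coef n X N phi 1 u v = 2 * f * dotn n Xu Nu /\
  area_coef n X N phi 4 u v = 2 * f * dotn n Xv Nv /\
  area_coef n X N phi 7 u v = f * (dotn n Xu Nv + dotn n Xv Nu) /\
  area_coef n X N phi 2 u v = a ^ 2 + 2 * a * f * dotn n (N u v) Nu + f ^ 2 * dotn n Nu Nu /\
  area_coef n X N phi 5 u v = b ^ 2 + 2 * b * f * dotn n (N u v) Nv + f ^ 2 * dotn n Nv Nv.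
Proof.
intros Huv. destruct (Hnormal u v Huv) as [HuN HvN]. assert (HNN := Hunit u v Huv).
simpl; unfold dvar_u, dvar_v.
rewrite !dotn_linl, !dotn_linr, !(dotn_comm n (N u v) (Vu X u v)),
  !(dotn_comm n (N u v) (Vv X u v)), !(dotn_comm n (Vu N u v) (Vu X u v)),
  !(dotn_comm n (Vv N u v) (Vv X u v)), (dotn_comm n (Vu N u v) (Vv X u v)),
  (dotn_comm n (Vu N u v) (N u v)), (dotn_comm n (Vv N u v) (N u v)), HuN, HvN, HNN.
repeat split; ring.
Qed.

Lemma unit_normal_derivative_orth u v : u ^ 2 + v ^ 2 < 1 ->
  dotn n (N u v) (Vu N u v) = 0 /\ dotn n (N u v) (Vv N u v) = 0.
Proof.
intros Hint. assert (Huv : inB u v) by (unfold inB; lra).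
assert (HNu := fun j Hj => CkBvec_is_derive_u n N 2 nil j u v HN Huv Hj ltac:(simpl; lia)).
assert (HNv := fun j Hj => CkBvec_is_derive_v n N 2 nil j u v HN Huv Hj ltac:(simpl; lia)).
assert (Eu : dotn n (Vu N u v) (N u v) + dotn n (N u v) (Vu N u v) = 0)
  by exact (dotn_const_derive_u n N N _ _ 1 u v Hunit Hint HNu HNu).
assert (Ev : dotn n (Vv N u v) (N u v) + dotn n (N u v) (Vv N u v) = 0)
  by exact (dotn_const_derive_v n N N _ _ 1 u v Hunit Hint HNv HNv).
rewrite dotn_comm in Eu, Ev. split; lra.
Qed.

Lemma weingarten u v : u ^ 2 + v ^ 2 < 1 ->
  dotn n (Vu X u v) (Vu N u v) = - dotn n (Vuu X u v) (N u v) /\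
  dotn n (Vu X u v) (Vv N u v) = - dotn n (Vuv X u v) (N u v) /\
  dotn n (Vv X u v) (Vu N u v) = - dotn n (Vuv X u v) (N u v) /\
  dotn n (Vv X u v) (Vv N u v) = - dotn n (Vvv X u v) (N u v).
Proof.
intros Hint. assert (Huv : inB u v) by (unfold inB; lra).
assert (HXu := fun a b H => proj1 (Hnormal a b H)).
assert (HXv := fun a b H => proj2 (Hnormal a b H)).
assert (HNu := fun j Hj => CkBvec_is_derive_u n N 2 nil j u v HN Huv Hj ltac:(simpl; lia)).
assert (HNv := fun j Hj => CkBvec_is_derive_v n N 2 nil j u v HN Huv Hj ltac:(simpl; lia)).
assert (I1 : dotn n (Vuu X u v) (N u v) + dotn n (Vu X u v) (Vu N u v) = 0)
  by exact (dotn_const_derive_u n (Vu X) N _ _ 0 u v HXu Hint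
    (fun j Hj => CkBvec_is_derive_u n X 3 (false :: nil) j u v HX Huv Hj ltac:(simpl; lia)) HNu).
assert (I2 : dotn n (Vuv X u v) (N u v) + dotn n (Vu X u v) (Vv N u v) = 0)
  by exact (dotn_const_derive_v n (Vu X) N _ _ 0 u v HXu Hint
    (fun j Hj => CkBvec_is_derive_v n X 3 (false :: nil) j u v HX Huv Hj ltac:(simpl; lia)) HNv).
assert (I3 : dotn n (Vuv X u v) (N u v) + dotn n (Vv X u v) (Vu N u v) = 0).
{ apply (dotn_const_derive_u n (Vv X) N _ _ 0 u v HXv Hint); [|exact HNu].
  intros j Hj. unfold Vuv. rewrite <- (CkB_Schwarz 3 (fun a b => X a b j) u v) by (auto; lia).
  apply (CkBvec_is_derive_u n X 3 (true :: nil)); simpl; auto; lia. }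
assert (I4 : dotn n (Vvv X u v) (N u v) + dotn n (Vv X u v) (Vv N u v) = 0)
  by exact (dotn_const_derive_v n (Vv X) N _ _ 0 u v HXv Hint
    (fun j Hj => CkBvec_is_derive_v n X 3 (true :: nil) j u v HX Huv Hj ltac:(simpl; lia)) HNv).
repeat split; lra.
Qed.

End UnitNormal.

Definition sff_term n X (Nf : nat -> R -> R -> nat -> R) (phi : R -> R -> R) s u v : R :=
  phi u v ^ 2 * (L11 n X Nf s u v ^ 2 + L12 n X Nf s u v ^ 2) / Wf n X u v.

Lemma continuous_B_grad_sq phi : C0inf phi ->
  continuous_B (fun u v => pu phi u v ^ 2 + pv phi u v ^ 2).
Proof.
intros Hphi u v Huv.
apply continuous_Rplus; apply continuous_Rsqr;
  [apply (C0inf_continuous phi (false :: nil)) | apply (C0inf_continuous phi (true :: nil))];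
  auto.
Qed.

Lemma continuous_B_sff_term n X Nf phi s : CkBvec 3 n X -> CkBvec 2 n (Nf s) -> C0inf phi ->
  (forall u v, inB u v -> 0 < Wf n X u v) -> continuous_B (sff_term n X Nf phi s).
Proof.
intros HX HN Hphi HW u v Huv.
assert (Hsff : forall l, (length l <= 3)%nat ->
  continuous (fun p : R * R => dotn n (fun j => pds l (fun a b => X a b j) (fst p) (snd p))
                                     (Nf s (fst p) (snd p))) (u, v)).
{ intros l Hl. apply continuous_dotn; intros j Hj;
    [apply (CkBvec_continuous n X 3 l) | apply (CkBvec_continuous n (Nf s) 2 nil)];
    simpl; auto; lia. }
apply continuous_Rdiv.
- apply continuous_Rmult; [apply continuous_Rsqr, (C0inf_continuous phi nil); auto|].
  apply continuous_Rplus; apply continuous_Rsqr;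
    [apply (Hsff (false :: false :: nil)) | apply (Hsff (true :: false :: nil))]; simpl; lia.
- apply continuous_dotn; intros j Hj; apply (CkBvec_continuous n X 3 (false :: nil));
    simpl; auto; lia.
- apply Rgt_not_eq, HW; auto.
Qed.

Section FlatMinimal.
Variables (n : nat) (X : R -> R -> nat -> R) (Nf : nat -> R -> R -> nat -> R).
Hypothesis Hn : (3 <= n)%nat.
Hypothesis HX : CkBvec 3 n X.
Hypothesis Hconf : forall u v, inB u v ->
  0 < Wf n X u v /\ dotn n (Vv X u v) (Vv X u v) = Wf n X u v /\
  dotn n (Vu X u v) (Vv X u v) = 0.
Hypothesis HN : forall s, (s < n - 2)%nat -> CkBvec 2 n (Nf s).
Hypothesis Hnormal : forall s, (s < n - 2)%nat -> forall u v, inB u v ->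
  dotn n (Vu X u v) (Nf s u v) = 0 /\ dotn n (Vv X u v) (Nf s u v) = 0.
Hypothesis Horth : forall s w, (s < n - 2)%nat -> (w < n - 2)%nat -> forall u v, inB u v ->
  dotn n (Nf s u v) (Nf w u v) = if Nat.eqb s w then 1 else 0.
Hypothesis Hflat : forall s w, (s < n - 2)%nat -> (w < n - 2)%nat -> s <> w ->
  forall u v, inB u v ->
  dotn n (Vu (Nf s) u v) (Nf w u v) = 0 /\ dotn n (Vv (Nf s) u v) (Nf w u v) = 0.
Hypothesis Hmin : forall s, (s < n - 2)%nat -> forall u v, inB u v ->
  L11 n X Nf s u v + L22 n X Nf s u v = 0.

Lemma Nf_unit s : (s < n - 2)%nat -> forall u v, inB u v -> dotn n (Nf s u v) (Nf s u v) = 1.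
Proof. intros Hs u v Huv. rewrite (Horth s s Hs Hs u v Huv), Nat.eqb_refl. reflexivity. Qed.

Lemma dotn_self_tangent y u v : inB u v ->
  (forall k, (k < n - 2)%nat -> dotn n y (Nf k u v) = 0) ->
  dotn n y y = (dotn n y (Vu X u v)) ^ 2 / Wf n X u v + (dotn n y (Vv X u v)) ^ 2 / Wf n X u v.
Proof.
intros Huv Hy. destruct (Hconf u v Huv) as [HW [HvW Huv0]].
rewrite (dotn_self_frame n (Vu X u v) (Vv X u v) y (fun k => Nf k u v) (Wf n X u v)
  ltac:(lia) HW eq_refl HvW Huv0 (fun k Hk => Hnormal k Hk u v Huv)
  (fun k l Hk Hl => Horth k l Hk Hl u v Huv)).
rewrite sumf_zero; [ring|]. intros k Hk. apply in_seq0 in Hk. rewrite Hy; auto. ring.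
Qed.

Lemma normal_derivative_norm s u v : (s < n - 2)%nat -> u ^ 2 + v ^ 2 < 1 ->
  let W := Wf n X u v in
  dotn n (Vu (Nf s) u v) (Vu (Nf s) u v) =
    dotn n (Vu X u v) (Vu (Nf s) u v) ^ 2 / W + dotn n (Vv X u v) (Vu (Nf s) u v) ^ 2 / W /\
  dotn n (Vv (Nf s) u v) (Vv (Nf s) u v) =
    dotn n (Vu X u v) (Vv (Nf s) u v) ^ 2 / W + dotn n (Vv X u v) (Vv (Nf s) u v) ^ 2 / W.
Proof.
intros Hs Hint W. assert (Huv : inB u v) by (unfold inB; lra).
destruct (unit_normal_derivative_orth n (Nf s) (HN s Hs) (Nf_unit s Hs) u v Hint) as [Q1 Q2].
rewrite !(dotn_comm n (Vu X u v)), !(dotn_comm n (Vv X u v)).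
split; apply dotn_self_tangent; auto; intros k Hk; destruct (Nat.eq_dec k s) as [->|Hne];
  [ rewrite dotn_comm; assumption | apply (Hflat s k Hs Hk (not_eq_sym Hne) u v Huv)
  | rewrite dotn_comm; assumption | apply (Hflat s k Hs Hk (not_eq_sym Hne) u v Huv) ].
Qed.

Lemma area_d2_flat_minimal phi s u v : C0inf phi -> (s < n - 2)%nat -> inB u v ->
  area_d2 (fun i => area_coef n X (Nf s) phi i u v) 0 =
  pu phi u v ^ 2 + pv phi u v ^ 2 - 2 * sff_term n X Nf phi s u v.
Proof.
intros Hphi Hs Huv. unfold sff_term.
destruct (Hconf u v Huv) as [HW [HvW Huv0]].
destruct (area_coef_unit_normal n X (Nf s) (Hnormal s Hs) (Nf_unit s Hs) phi u v Huv)
  as [E1 [E4 [E7 [E2 E5]]]].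
assert (HL := Hmin s Hs u v Huv).
unfold L11, L12, L22 in *.
destruct (Rlt_or_le (u ^ 2 + v ^ 2) 1) as [Hint|Hbd].
- destruct (weingarten n X (Nf s) HX (HN s Hs) (Hnormal s Hs) u v Hint) as [P1 [P2 [P3 P4]]].
  destruct (unit_normal_derivative_orth n (Nf s) (HN s Hs) (Nf_unit s Hs) u v Hint) as [Q1 Q2].
  destruct (normal_derivative_norm s u v Hs Hint) as [M1 M2].
  replace (dotn n (Vvv X u v) (Nf s u v)) with (- dotn n (Vuu X u v) (Nf s u v)) in P4 by lra.
  rewrite (area_d2_conformal _ (Wf n X u v) HW); auto.
  + rewrite E2, E5, E1, E4, E7, Q1, Q2, M1, M2, P1, P2, P3, P4. field. lra.
  + rewrite E1, E4, P1, P4. ring.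
- (* The Weingarten relations need an interior point, but on the unit circle
     phi and its gradient vanish. *)
  destruct (C0inf_boundary phi u v Hphi Huv Hbd) as [Hf [Ha Hb]].
  rewrite (area_d2_conformal _ (Wf n X u v) HW); auto.
  + rewrite E2, E5, E1, E4, E7, Hf, Ha, Hb. field. lra.
  + rewrite E1, E4, Hf. ring.
Qed.

Lemma Nf_unit_normal s : (s < n - 2)%nat -> forall u v, inB u v ->
  dotn n (Vu X u v) (Nf s u v) = 0 /\ dotn n (Vv X u v) (Nf s u v) = 0 /\
  dotn n (Nf s u v) (Nf s u v) = 1.
Proof.
intros Hs u v Huv. destruct (Hnormal s Hs u v Huv). repeat split; auto. apply Nf_unit; auto.
Qed.

Lemma Wf_pos u v : inB u v -> 0 < Wf n X u v.
Proof. intros Huv. apply Hconf; auto. Qed.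

Lemma IntB_neg_GaussK phi : C0inf phi ->
  IntB (fun u v => - GaussK n X Nf u v * Wf n X u v * phi u v ^ 2) =
  sumf (seq 0 (n - 2)) (fun s => IntB (sff_term n X Nf phi s)).
Proof.
intros Hphi. rewrite <- IntB_sumf.
- apply IntB_ext. intros u v Huv. unfold GaussK.
  change (fold_right Rplus 0 (map ?f (seq 0 (n - 2)))) with (sumf (seq 0 (n - 2)) f).
  match goal with |- - sumf ?l ?f * ?w * ?p = _ =>
    replace (- sumf l f * w * p) with ((- w * p) * sumf l f) by ring end.
  rewrite <- sumf_scal.
  apply sumf_ext. intros s Hs. apply in_seq0 in Hs.
  assert (HW := Wf_pos u v Huv).
  unfold sff_term. replace (L22 n X Nf s u v) with (- L11 n X Nf s u v)
    by (assert (H := Hmin s Hs u v Huv); lra).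
  field. lra.
- intros s Hs. apply in_seq0 in Hs. apply continuous_B_sff_term; auto using Wf_pos.
Qed.

Lemma IntB_neg_GaussK_ge0 phi : C0inf phi ->
  0 <= IntB (fun u v => - GaussK n X Nf u v * Wf n X u v * phi u v ^ 2).
Proof.
intros Hphi. rewrite IntB_neg_GaussK by auto.
apply sumf_ge0. intros s Hs. apply in_seq0 in Hs.
apply IntB_ge0; [apply continuous_B_sff_term; auto using Wf_pos|].
intros u v Huv. unfold sff_term. assert (HW := Wf_pos u v Huv).
apply Rmult_le_pos; [|apply Rlt_le, Rinv_0_lt_compat; auto].
apply Rmult_le_pos; [apply pow2_ge_0 | apply Rplus_le_le_0_compat; apply pow2_ge_0].
Qed.

Hypothesis Hstable : forall (N : R -> R -> nat -> R) (phi : R -> R -> R),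
  CkBvec 2 n N ->
  (forall u v, inB u v ->
     dotn n (Vu X u v) (N u v) = 0 /\ dotn n (Vv X u v) (N u v) = 0 /\
     dotn n (N u v) (N u v) = 1) ->
  C0inf phi -> 0 <= Derive_n (fun eps => Area n (vary X eps phi N)) 2 0.

Lemma stable_sff_bound phi s : C0inf phi -> (s < n - 2)%nat ->
  2 * IntB (sff_term n X Nf phi s) <= IntB (fun u v => pu phi u v ^ 2 + pv phi u v ^ 2).
Proof.
intros Hphi Hs.
assert (H := Hstable (Nf s) phi (HN s Hs) (Nf_unit_normal s Hs) Hphi).
rewrite (Derive_2_Area_vary n X (Nf s) phi HX (HN s Hs) Hphi Hconf) in H.
rewrite (IntB_ext _ (fun u v => (pu phi u v ^ 2 + pv phi u v ^ 2)
                                + (-2) * sff_term n X Nf phi s u v)) in H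
  by (intros u v Huv; rewrite area_d2_flat_minimal; auto; ring).
rewrite IntB_plus, IntB_scal in H;
  auto using continuous_B_grad_sq, continuous_B_sff_term, continuous_B_scal, Wf_pos.
lra.
Qed.

Lemma stable_neg_GaussK_bound phi : C0inf phi ->
  2 * IntB (fun u v => - GaussK n X Nf u v * Wf n X u v * phi u v ^ 2)
  <= INR (n - 2) * IntB (fun u v => pu phi u v ^ 2 + pv phi u v ^ 2).
Proof.
intros Hphi. rewrite IntB_neg_GaussK, <- sumf_scal by auto.
rewrite <- (length_seq (n - 2) 0) at 2. rewrite <- sumf_const.
apply sumf_le. intros s Hs. apply in_seq0 in Hs. apply stable_sff_bound; auto.
Qed.

End FlatMinimal.
Theorem mainTheorem4 (n : nat) (X : R -> R -> nat -> R)
  (Nf : nat -> R -> R -> nat -> R) :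
  (3 <= n)%nat ->
  CkBvec 3 n X ->
  (* conformal immersion *)
  (forall u v, inB u v ->
     0 < Wf n X u v /\
     dotn n (Vv X u v) (Vv X u v) = Wf n X u v /\
     dotn n (Vu X u v) (Vv X u v) = 0) ->
  (* C^2 orthonormal normal section N_0, ..., N_{n-3} *)
  (forall s, (s < n - 2)%nat -> CkBvec 2 n (Nf s)) ->
  (forall s, (s < n - 2)%nat -> forall u v, inB u v ->
     dotn n (Vu X u v) (Nf s u v) = 0 /\ dotn n (Vv X u v) (Nf s u v) = 0) ->
  (forall s w, (s < n - 2)%nat -> (w < n - 2)%nat -> forall u v, inB u v ->
     dotn n (Nf s u v) (Nf w u v) = if Nat.eqb s w then 1 else 0) ->
  (* flat normal bundle: all torsion coefficients vanish *)
  (forall s w, (s < n - 2)%nat -> (w < n - 2)%nat -> s <> w -> forall u v, inB u v ->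
     dotn n (Vu (Nf s) u v) (Nf w u v) = 0 /\ dotn n (Vv (Nf s) u v) (Nf w u v) = 0) ->
  (* minimal *)
  (forall s, (s < n - 2)%nat -> forall u v, inB u v ->
     L11 n X Nf s u v + L22 n X Nf s u v = 0) ->
  (* stable *)
  (forall (N : R -> R -> nat -> R) (phi : R -> R -> R),
     CkBvec 2 n N ->
     (forall u v, inB u v ->
        dotn n (Vu X u v) (N u v) = 0 /\ dotn n (Vv X u v) (N u v) = 0 /\
        dotn n (N u v) (N u v) = 1) ->
     C0inf phi ->
     0 <= Derive_n (fun eps => Area n (vary X eps phi N)) 2 0) ->
  forall mu : R, 0 < mu -> mu <= 2 / INR (n - 2) ->
  forall phi : R -> R -> R, C0inf phi ->
    IntB (fun u v => (pu phi u v) ^ 2 + (pv phi u v) ^ 2)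
    >= mu * IntB (fun u v => (- GaussK n X Nf u v) * Wf n X u v * (phi u v) ^ 2).

Proof.
intros Hn HX Hconf HN Hnormal Horth Hflat Hmin Hstable mu Hmu Hmu2 phi Hphi.
assert (Hbound := stable_neg_GaussK_bound n X Nf Hn HX Hconf HN Hnormal Horth Hflat Hmin
                    Hstable phi Hphi).
assert (HK := IntB_neg_GaussK_ge0 n X Nf HX Hconf HN Hmin phi Hphi).
set (G := IntB (fun u v => pu phi u v ^ 2 + pv phi u v ^ 2)) in *.
set (Z := IntB (fun u v => - GaussK n X Nf u v * Wf n X u v * phi u v ^ 2)) in *.
assert (Hk : 0 < INR (n - 2)) by (apply lt_0_INR; lia).
assert (HmuZ : mu * Z <= 2 / INR (n - 2) * Z) by (apply Rmult_le_compat_r; auto).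
assert (HZG : 2 / INR (n - 2) * Z <= G).
{ apply Rmult_le_reg_l with (INR (n - 2)); auto.
  replace (INR (n - 2) * (2 / INR (n - 2) * Z)) with (2 * Z) by (field; lra). lra. }
lra.
Qed.
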